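(* Let $\mathbb{C}$ be a cartesian monoidal category and let $T$ be an observational commutative monad on $\mathbb{C}$. Then every deterministic morphism of the Kleisli category $\mathsf{Kl}(T)$ is thunkable.
   Context: $\mathbb{C}$ has finite products (terminal object $1$); $T=(T,\eta,\mu)$ is a commutative monad on $\mathbb{C}$, with associated symmetric monoidal structure $\nabla_{A,B}:TA\times TB\to T(A\times B)$. The Kleisli category $\mathsf{Kl}(T)$ has the objects of $\mathbb{C}$; a morphism $f:A\rightsquigarrow B$ corresponds to a morphism $f^\sharp:A\to TB$ of $\mathbb{C}$; composition is $(g\circledcirc f)^\sharp=\mu\circ T(g^\sharp)\circ f^\sharp$ and identities are $\eta$. $\mathsf{Kl}(T)$ is symmetric monoidal with tensor $\otimes$ given on objects by $\times$ and on morphisms by $(f\otimes g)^\sharp=\nabla\circ(f^\sharp\times g^\sharp)$. For each object $X$, $\mathsf{copy}_X:X\rightsquigarrow X\otimes X$ and $\mathsf{del}_X:X\rightsquigarrow 1$ are the Kleisli morphisms with $\mathsf{copy}_X^\sharp=\eta\circ\Delta_X$ and $\mathsf{del}_X^\sharp=\eta\circ !_X$. A Kleisli morphism $f:X\rightsquigarrow Y$ is copyable if $\mathsf{copy}_Y\circledcirc f=(f\otimes f)\circledcirc\mathsf{copy}_X$, discardable if $\mathsf{del}_Y\circledcirc f=\mathsf{del}_X$, and deterministic if it is both. Define $\mathsf{force}_A:TA\rightsquigarrow A$ by $\mathsf{force}_A^\sharp=1_{TA}$, $\mathsf{thunk}_A:A\rightsquigarrow TA$ by $\mathsf{thunk}_A^\sharp=\eta_{TA}\circ\eta_A$,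 and the functor $\tilde T:\mathsf{Kl}(T)\to\mathsf{Kl}(T)$ by $\tilde TA=TA$ and $(\tilde T f)^\sharp=\eta_{TB}\circ\mu_B\circ T(f^\sharp)$ for $f:A\rightsquigarrow B$. A Kleisli morphism $f:A\rightsquigarrow B$ is thunkable if $\mathsf{thunk}_B\circledcirc f=\tilde Tf\circledcirc\mathsf{thunk}_A$. For $n\in\mathbb{N}$, let $\mathsf{copy}_n:TX\rightsquigarrow (TX)^{\otimes n}$ be the Kleisli morphism with $\mathsf{copy}_n^\sharp=\eta\circ\Delta_n$ where $\Delta_n:TX\to(TX)^n$ is the $n$-fold diagonal, and define the $n$-th sampling map $\mathsf{samp}_n=\mathsf{force}^{\otimes n}\circledcirc\mathsf{copy}_n:TX\rightsquigarrow X^{\otimes n}$ (so $\mathsf{samp}_0=\mathsf{del}$, $\mathsf{samp}_1=\mathsf{force}$). $T$ is observational if for every object $X$ the family $(\mathsf{samp}_n:TX\rightsquigarrow X^{\otimes n})_{n\in\mathbb{N}}$ is jointly monic in $\mathsf{Kl}(T)$, i.e. for any $f,g:A\rightsquigarrow TX$, if $\mathsf{samp}_n\circledcirc f=\mathsf{samp}_n\circledcirc g$ for all $n$ then $f=g$. *)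

(* Hom-sets are types and
   equality of morphisms is Leibniz equality. *)
Set Implicit Arguments.
Unset Strict Implicit.

Record Category := {
  ob :> Type;
  hom : ob -> ob -> Type;
  idm : forall A, hom A A;
  comp : forall {A B C}, hom B C -> hom A B -> hom A C;
  comp_id_l : forall A B (f : hom A B), comp (idm B) f = f;
  comp_id_r : forall A B (f : hom A B), comp f (idm A) = f;
  comp_assoc : forall A B C D (h : hom C D) (g : hom B C) (f : hom A B),
      comp h (comp g f) = comp (comp h g) f
}.
Arguments hom {c} _ _.
Arguments idm {c} A.
Arguments comp {c A B C} _ _.
Notation "g ∘ f" := (comp g f) (at level 40, left associativity).

Record Cartesian (C : Category) := {
  one : C;
  bang : forall A : C, hom A one;
  bang_unique : forall (A : C) (f : hom A one), f = bang A;
  prod : C -> C -> C;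
  p1 : forall A B : C, hom (prod A B) A;
  p2 : forall A B : C, hom (prod A B) B;
  pair : forall {X A B : C}, hom X A -> hom X B -> hom X (prod A B);
  pair_p1 : forall (X A B : C) (f : hom X A) (g : hom X B), p1 A B ∘ pair f g = f;
  pair_p2 : forall (X A B : C) (f : hom X A) (g : hom X B), p2 A B ∘ pair f g = g;
  pair_unique : forall (X A B : C) (h : hom X (prod A B)),
      h = pair (p1 A B ∘ h) (p2 A B ∘ h)
}.
Arguments one {C} c.
Arguments bang {C} c A.
Arguments prod {C} c _ _.
Arguments p1 {C} c A B.
Arguments p2 {C} c A B.
Arguments pair {C} c {X A B} _ _.

Section CartOps.
Context {C : Category} (P : Cartesian C).
Definition pmap {A B A' B' : C} (f : hom A A') (g : hom B B')
  : hom (prod P A B) (prod P A' B') :=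
  pair P (f ∘ p1 P A B) (g ∘ p2 P A B).
Definition swap (A B : C) : hom (prod P A B) (prod P B A) :=
  pair P (p2 P A B) (p1 P A B).
Definition assoc (A B D : C) : hom (prod P (prod P A B) D) (prod P A (prod P B D)) :=
  pair P (p1 P A B ∘ p1 P (prod P A B) D)
         (pair P (p2 P A B ∘ p1 P (prod P A B) D) (p2 P (prod P A B) D)).
Definition diag (A : C) : hom A (prod P A A) := pair P (idm A) (idm A).
End CartOps.

Record Monad (C : Category) := {
  T : C -> C;
  fmap : forall {A B : C}, hom A B -> hom (T A) (T B);
  fmap_id : forall A : C, fmap (idm A) = idm (T A);
  fmap_comp : forall (A B D : C) (g : hom B D) (f : hom A B),
      fmap (g ∘ f) = fmap g ∘ fmap f;
  eta : forall A : C, hom A (T A);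
  mu : forall A : C, hom (T (T A)) (T A);
  eta_nat : forall (A B : C) (f : hom A B), fmap f ∘ eta A = eta B ∘ f;
  mu_nat : forall (A B : C) (f : hom A B), fmap f ∘ mu A = mu B ∘ fmap (fmap f);
  mu_eta_l : forall A : C, mu A ∘ eta (T A) = idm (T A);
  mu_eta_r : forall A : C, mu A ∘ fmap (eta A) = idm (T A);
  mu_assoc : forall A : C, mu A ∘ mu (T A) = mu A ∘ fmap (mu A)
}.
Arguments T {C} m _.
Arguments fmap {C} m {A B} _.
Arguments eta {C} m A.
Arguments mu {C} m A.

Record Strength {C : Category} (P : Cartesian C) (M : Monad C) := {
  st : forall A B : C, hom (prod P A (T M B)) (T M (prod P A B));
  st_nat : forall (A A' B B' : C) (f : hom A A') (g : hom B B'),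
      st A' B' ∘ pmap P f (fmap M g) = fmap M (pmap P f g) ∘ st A B;
  st_unit : forall B : C,
      fmap M (p2 P (one P) B) ∘ st (one P) B = p2 P (one P) (T M B);
  st_assoc : forall A B D : C,
      fmap M (assoc P A B D) ∘ st (prod P A B) D
      = st A (prod P B D) ∘ pmap P (idm A) (st B D) ∘ assoc P A B (T M D);
  st_eta : forall A B : C, st A B ∘ pmap P (idm A) (eta M B) = eta M (prod P A B);
  st_mu : forall A B : C,
      st A B ∘ pmap P (idm A) (mu M B) = mu M (prod P A B) ∘ fmap M (st A B) ∘ st A (T M B)
}.
Arguments st {C P M} s A B.

Section Commutative.
Context {C : Category} (P : Cartesian C) (M : Monad C) (S : Strength P M).
Definition cost (A B : C) : hom (prod P (T M A) B) (T M (prod P A B)) :=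
  fmap M (swap P B A) ∘ st S B A ∘ swap P (T M A) B.
Definition dst (A B : C) : hom (prod P (T M A) (T M B)) (T M (prod P A B)) :=
  mu M (prod P A B) ∘ fmap M (cost A B) ∘ st S (T M A) B.
Definition dst' (A B : C) : hom (prod P (T M A) (T M B)) (T M (prod P A B)) :=
  mu M (prod P A B) ∘ fmap M (st S A B) ∘ cost A (T M B).
Definition commutative : Prop := forall A B : C, dst A B = dst' A B.
End Commutative.

Record CommMonad {C : Category} (P : Cartesian C) := {
  cm_monad :> Monad C;
  cm_strength : Strength P cm_monad;
  cm_comm : commutative cm_strength
}.

Section Kleisli.
Context {C : Category} {P : Cartesian C} (M : CommMonad P).

Definition kl (A B : C) := hom A (T M B).
Definition kcomp {A B D : C} (g : kl B D) (f : kl A B) : kl A D :=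
  mu M D ∘ fmap M g ∘ f.
Definition kid (A : C) : kl A A := eta M A.
Definition nabla (A B : C) := dst (cm_strength M) A B.
Definition ktensor {A B A' B' : C} (f : kl A A') (g : kl B B') :
  kl (prod P A B) (prod P A' B') := nabla A' B' ∘ pmap P f g.
Definition copy (X : C) : kl X (prod P X X) := eta M _ ∘ diag P X.
Definition del (X : C) : kl X (one P) := eta M _ ∘ bang P X.

Definition copyable {X Y : C} (f : kl X Y) : Prop :=
  kcomp (copy Y) f = kcomp (ktensor f f) (copy X).
Definition discardable {X Y : C} (f : kl X Y) : Prop :=
  kcomp (del Y) f = del X.
Definition deterministic {X Y : C} (f : kl X Y) : Prop :=
  copyable f /\ discardable f.

Definition force (A : C) : kl (T M A) A := idm (T M A).
Definition thunk (A : C) : kl A (T M A) := eta M (T M A) ∘ eta M A.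
Definition Ttilde {A B : C} (f : kl A B) : kl (T M A) (T M B) :=
  eta M (T M B) ∘ mu M B ∘ fmap M f.
Definition thunkable {A B : C} (f : kl A B) : Prop :=
  kcomp (thunk B) f = kcomp (Ttilde f) (thunk A).

Fixpoint tpow (X : C) (n : nat) : C :=
  match n with O => one P | S n => prod P X (tpow X n) end.
Fixpoint ktpow {A B : C} (f : kl A B) (n : nat) : kl (tpow A n) (tpow B n) :=
  match n with O => kid (one P) | S n => ktensor f (ktpow f n) end.
Fixpoint diagn (A : C) (n : nat) : hom A (tpow A n) :=
  match n with O => bang P A | S n => pair P (idm A) (diagn A n) end.
Definition copyn (X : C) (n : nat) : kl (T M X) (tpow (T M X) n) :=
  eta M _ ∘ diagn (T M X) n.
Definition samp (X : C) (n : nat) : kl (T M X) (tpow X n) :=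
  kcomp (ktpow (force X) n) (copyn X n).

Definition observational : Prop :=
  forall (X A : C) (f g : kl A (T M X)),
    (forall n, kcomp (samp X n) f = kcomp (samp X n) g) -> f = g.
End Kleisli.

(* Sampling a point mass returns copies of the point, so samp_n ⊚ thunk ⊚ f is
   T(Δ_n) ∘ f, while samp_n ⊚ T̃f ⊚ thunk is samp_n ∘ f. For a deterministic f
   these agree: induction on n, using copyability of f to split off one sample
   and discardability for n = 0. Observationality then identifies
   thunk ⊚ f with T̃f ⊚ thunk. *)

Section CartesianLemmas.
Context {C : Category} (P : Cartesian C).

Lemma pair_ext {X A B : C} (h h' : hom X (prod P A B)) :
  p1 P A B ∘ h = p1 P A B ∘ h' -> p2 P A B ∘ h = p2 P A B ∘ h' -> h = h'.
Proof.
  intros E1 E2. rewrite (pair_unique h), (pair_unique h'), E1, E2. reflexivity.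
Qed.

Lemma pair_comp {X Y A B : C} (f : hom Y A) (g : hom Y B) (h : hom X Y) :
  pair P f g ∘ h = pair P (f ∘ h) (g ∘ h).
Proof. apply pair_ext; rewrite comp_assoc, ?pair_p1, ?pair_p2; reflexivity. Qed.

Lemma pmap_pair {X A B A' B' : C} (f : hom A A') (g : hom B B')
  (h : hom X A) (k : hom X B) :
  pmap P f g ∘ pair P h k = pair P (f ∘ h) (g ∘ k).
Proof.
  unfold pmap. rewrite pair_comp, <- !comp_assoc, pair_p1, pair_p2. reflexivity.
Qed.

Lemma pmap_comp {A B A' B' A'' B'' : C} (f : hom A' A'') (g : hom B' B'')
  (h : hom A A') (k : hom B B') :
  pmap P f g ∘ pmap P h k = pmap P (f ∘ h) (g ∘ k).
Proof. unfold pmap at 2. rewrite pmap_pair, !comp_assoc. reflexivity. Qed.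

Lemma swap_pmap {A B A' B' : C} (f : hom A A') (g : hom B B') :
  swap P A' B' ∘ pmap P f g = pmap P g f ∘ swap P A B.
Proof.
  unfold swap at 2. rewrite pmap_pair.
  unfold swap, pmap. rewrite pair_comp, pair_p1, pair_p2. reflexivity.
Qed.

Lemma swap_involutive (A B : C) : swap P B A ∘ swap P A B = idm _.
Proof.
  unfold swap. rewrite pair_comp, pair_p1, pair_p2.
  apply pair_ext; rewrite ?pair_p1, ?pair_p2, comp_id_r; reflexivity.
Qed.

End CartesianLemmas.

Section StrengthLemmas.
Context {C : Category} (P : Cartesian C) (M : Monad C) (S : Strength P M).

Lemma cost_eta (A B : C) :
  cost S A B ∘ pmap P (eta M A) (idm B) = eta M (prod P A B).
Proof.
  unfold cost. rewrite <- !comp_assoc, swap_pmap, (comp_assoc (st S B A)), st_eta.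
  rewrite (comp_assoc (fmap M _)), eta_nat, <- comp_assoc, swap_involutive, comp_id_r.
  reflexivity.
Qed.

Lemma dst_eta (A B : C) :
  dst S A B ∘ pmap P (eta M A) (eta M B) = eta M (prod P A B).
Proof.
  assert (split_eta : pmap P (eta M A) (eta M B)
                      = pmap P (idm _) (eta M B) ∘ pmap P (eta M A) (idm B)).
  { rewrite pmap_comp, comp_id_l, comp_id_r. reflexivity. }
  unfold dst. rewrite split_eta, <- !comp_assoc, (comp_assoc (st S _ _)), st_eta.
  rewrite (comp_assoc (fmap M _)), eta_nat, <- comp_assoc, cost_eta.
  rewrite comp_assoc, mu_eta_l, comp_id_l. reflexivity.
Qed.

Lemma cost_nat_r (A B B' : C) (k : hom B B') :
  cost S A B' ∘ pmap P (idm _) k = fmap M (pmap P (idm A) k) ∘ cost S A B.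
Proof.
  unfold cost. rewrite <- !comp_assoc, swap_pmap, <- (fmap_id M A).
  rewrite (comp_assoc (st S _ _)), st_nat, <- !comp_assoc.
  rewrite !comp_assoc, <- !fmap_comp, swap_pmap. reflexivity.
Qed.

Lemma dst_nat_r (A B B' : C) (k : hom B B') :
  dst S A B' ∘ pmap P (idm _) (fmap M k) = fmap M (pmap P (idm A) k) ∘ dst S A B.
Proof.
  unfold dst. rewrite <- !comp_assoc, st_nat.
  rewrite (comp_assoc (fmap M _) (fmap M _)), <- fmap_comp, cost_nat_r, fmap_comp.
  rewrite !comp_assoc, mu_nat. reflexivity.
Qed.

End StrengthLemmas.

Section KleisliLemmas.
Context {C : Category} {P : Cartesian C} (M : CommMonad P).

Lemma kcomp_eta_r {A B D : C} (g : kl M B D) (h : hom A B) :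
  kcomp g (eta M B ∘ h) = g ∘ h.
Proof.
  unfold kcomp. rewrite comp_assoc, <- (comp_assoc (mu M D)), eta_nat.
  rewrite comp_assoc, mu_eta_l, comp_id_l. reflexivity.
Qed.

Lemma kcomp_eta_l {A B D : C} (k : hom B D) (f : kl M A B) :
  kcomp (eta M D ∘ k) f = fmap M k ∘ f.
Proof.
  unfold kcomp. rewrite fmap_comp, comp_assoc, mu_eta_r, comp_id_l. reflexivity.
Qed.

Lemma kcomp_fmap_r {A B B' D : C} (g : kl M B' D) (h : hom B B') (f : kl M A B) :
  kcomp g (fmap M h ∘ f) = kcomp (g ∘ h) f.
Proof. unfold kcomp. rewrite fmap_comp, !comp_assoc. reflexivity. Qed.

Lemma kcomp_thunk_l {A B : C} (f : kl M A B) :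
  kcomp (thunk M B) f = fmap M (eta M B) ∘ f.
Proof. apply kcomp_eta_l. Qed.

Lemma kcomp_Ttilde_thunk {A B : C} (f : kl M A B) :
  kcomp (Ttilde f) (thunk M A) = eta M (T M B) ∘ f.
Proof.
  unfold thunk. rewrite kcomp_eta_r. unfold Ttilde.
  rewrite <- !comp_assoc, eta_nat, (comp_assoc (mu M B)), mu_eta_l, comp_id_l.
  reflexivity.
Qed.

Lemma copyableE {X Y : C} (f : kl M X Y) :
  copyable f <-> fmap M (diag P Y) ∘ f = nabla M Y Y ∘ pair P f f.
Proof.
  unfold copyable, copy. rewrite kcomp_eta_l, kcomp_eta_r.
  unfold ktensor, diag. rewrite <- comp_assoc, pmap_pair, !comp_id_r. apply iff_refl.
Qed.

Lemma discardableE {X Y : C} (f : kl M X Y) :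
  discardable f <-> fmap M (bang P Y) ∘ f = eta M (one P) ∘ bang P X.
Proof. unfold discardable, del. rewrite kcomp_eta_l. apply iff_refl. Qed.

Lemma samp_O (X : C) : samp M X 0 = eta M (one P) ∘ bang P (T M X).
Proof. unfold samp, copyn. rewrite kcomp_eta_r. reflexivity. Qed.

Lemma samp_S (X : C) (n : nat) :
  samp M X (S n) = nabla M X (tpow X n) ∘ pair P (idm _) (samp M X n).
Proof.
  unfold samp, copyn. rewrite !kcomp_eta_r. simpl. unfold ktensor, force.
  rewrite <- comp_assoc, pmap_pair, comp_id_l. reflexivity.
Qed.

Lemma samp_eta (X : C) (n : nat) :
  samp M X n ∘ eta M X = eta M (tpow X n) ∘ diagn X n.
Proof.
  induction n as [|n IH]; simpl.
  - rewrite samp_O, <- comp_assoc, (bang_unique (bang P (T M X) ∘ eta M X)).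
    reflexivity.
  - rewrite samp_S, <- comp_assoc, pair_comp, IH, comp_id_l, <- (comp_id_r (eta M X)).
    rewrite <- pmap_pair, comp_assoc. unfold nabla. rewrite dst_eta. reflexivity.
Qed.

Lemma deterministic_samp {X Y : C} (f : kl M X Y) (n : nat) :
  deterministic f -> fmap M (diagn Y n) ∘ f = samp M Y n ∘ f.
Proof.
  intros [copy_f del_f]. apply copyableE in copy_f. apply discardableE in del_f.
  induction n as [|n IH]; simpl.
  - rewrite del_f, samp_O, <- comp_assoc, (bang_unique (bang P (T M Y) ∘ f)).
    reflexivity.
  - assert (diagn_S : pair P (idm Y) (diagn (P := P) Y n)
                      = pmap P (idm Y) (diagn Y n) ∘ diag P Y).
    { unfold diag. rewrite pmap_pair, !comp_id_r. reflexivity. }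
    rewrite diagn_S, fmap_comp, <- comp_assoc, copy_f, comp_assoc.
    unfold nabla. rewrite <- dst_nat_r.
    rewrite <- comp_assoc, pmap_pair, comp_id_l, IH, samp_S, <- comp_assoc.
    rewrite pair_comp, comp_id_l. reflexivity.
Qed.

End KleisliLemmas.

Theorem theorem7p1 (C : Category) (P : Cartesian C) (M : CommMonad P) :
  observational M ->
  forall (X Y : C) (f : kl M X Y), deterministic f -> thunkable f.
Proof.
  intros observ X Y f det_f. unfold thunkable. apply observ. intros n.
  rewrite kcomp_thunk_l, kcomp_Ttilde_thunk, kcomp_fmap_r, samp_eta.
  rewrite kcomp_eta_l, kcomp_eta_r.
  apply deterministic_samp. exact det_f.
Qed.
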